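(* Let $r_0>0$ be such that for every $0\le r\le r_0$ and every $\beta\ge0$ one has $\int_0^\beta (r^2+2\sin^2y)^{1/2}\bigl(\frac34-\sin^2y\bigr)dy\ge0$. For $r>0$ and $w,z\in\mathbb R$ define \begin{align*} G_0(r,w)&=\int_0^w\Bigl(1+\frac{2\sin^2(ry)}{r^2}\Bigr)^{1/2}\frac{2\sin^2(ry)}{r^2}\,dy,\\ G_1(r,z)&=\frac32\int_0^z G_0(r,w)\Bigl(1+\frac{2\sin^2(rw)}{r^2}\Bigr)^{1/2}dw,\\ G_2(r,w)&=\int_0^w\Bigl(1+\frac{2\sin^2(ry)}{r^2}\Bigr)^{1/2}dy. \end{align*} Then for every $0<r\le r_0$ and every $z\in\mathbb R$, \[ |G_1(r,z)|\le\frac94\cdot\frac12\cdot\frac{\bigl(G_2(r,z)\bigr)^2}{r^2}. \] *)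

From Stdlib Require Import Reals.
From Coquelicot Require Import Coquelicot.
Open Scope R_scope.

Definition G0 (r w : R) : R :=
  RInt (fun y => sqrt (1 + 2 * (sin (r * y))^2 / r^2) * (2 * (sin (r * y))^2 / r^2)) 0 w.

Definition G1 (r z : R) : R :=
  3/2 * RInt (fun w => G0 r w * sqrt (1 + 2 * (sin (r * w))^2 / r^2)) 0 z.

Definition G2 (r w : R) : R :=
  RInt (fun y => sqrt (1 + 2 * (sin (r * y))^2 / r^2)) 0 w.

(* Write F(y) = (1 + 2 sin^2(ry)/r^2)^{1/2}, so that G_2' = F, G_0' = F (2 sin^2(ry)/r^2) and
   G_1' = 3/2 G_0 F.  Substituting u = r y shows that 3/(2r^2) G_2(w) - G_0(w) is a positive
   multiple of the integral in the hypothesis, taken up to r w; hence 0 <= G_0 <= 3/(2r^2) G_2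
   on [0, oo).  Multiplying by F >= 0 and integrating gives
   0 <= G_1(z) <= 3/2 * 3/(2r^2) * G_2(z)^2/2 for z >= 0, and the case z < 0 follows because
   G_0 and G_2 are odd and G_1 is even. *)
From Stdlib Require Import Reals Lra.
From Coquelicot Require Import Coquelicot.
Open Scope R_scope.

Lemma RInt_0_opp (f : R -> R) (s w : R) :
  (forall a b, ex_RInt f a b) -> (forall y, f (- y) = s * f y) ->
  RInt f 0 (- w) = - s * RInt f 0 w.
Proof.
  intros f_int f_parity.
  transitivity (RInt (fun y => -1 * f (-1 * y + 0)) 0 w).
  { symmetry. etransitivity; [apply (RInt_comp_lin f (-1) 0 0 w), f_int | f_equal; ring]. }
  transitivity (RInt (fun y => - s * f y) 0 w).
  { apply RInt_ext; intros y _.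
    replace (-1 * y + 0) with (- y) by ring. rewrite f_parity.
    change (-1 * (s * f y) = - s * f y). ring. }
  apply is_RInt_unique, (@is_RInt_scal R_NormedModule).
  apply (@RInt_correct R_CompleteNormedModule), f_int.
Qed.

Lemma ex_RInt_continuous_everywhere (f : R -> R) (a b : R) :
  (forall y, continuous f y) -> ex_RInt f a b.
Proof.
  intros f_cont. apply (@ex_RInt_continuous R_CompleteNormedModule); intros; apply f_cont.
Qed.

Lemma is_derive_RInt_0 (f : R -> R) (x : R) :
  (forall y, continuous f y) -> is_derive (fun w => RInt f 0 w) x (f x).
Proof.
  intros f_cont. apply (is_derive_RInt f _ 0); [|apply f_cont].
  apply filter_forall; intros w.
  apply (@RInt_correct R_CompleteNormedModule), ex_RInt_continuous_everywhere, f_cont.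
Qed.

Lemma is_derive_continuous (g : R -> R) (g' : R) (x : R) :
  is_derive g x g' -> continuous g x.
Proof. intros Hg. apply (@ex_derive_continuous R_AbsRing R_NormedModule). now exists g'. Qed.

Lemma is_RInt_mul_derive (G f : R -> R) (a b : R) :
  (forall x, is_derive G x (f x)) -> (forall x, continuous f x) ->
  is_RInt (fun x => G x * f x) a b ((G b ^ 2 - G a ^ 2) / 2).
Proof.
  intros G_der f_cont.
  replace ((G b ^ 2 - G a ^ 2) / 2) with (minus (/ 2 * G b ^ 2) (/ 2 * G a ^ 2))
    by (unfold minus, plus, opp; simpl; field).
  apply (@is_RInt_derive R_CompleteNormedModule (fun x => / 2 * G x ^ 2)).
  - intros x _.
    replace (G x * f x) with (/ 2 * (INR 2 * f x * G x ^ Nat.pred 2)) by (simpl; field).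
    apply is_derive_scal, is_derive_pow, G_der.
  - intros x _.
    apply (@continuous_mult R_UniformSpace R_AbsRing G f); [|apply f_cont].
    exact (is_derive_continuous G (f x) x (G_der x)).
Qed.

Section Profiles.

Variable r : R.

Definition G2_density (y : R) : R := sqrt (1 + 2 * (sin (r * y))^2 / r^2).

Definition G0_density (y : R) : R := G2_density y * (2 * (sin (r * y))^2 / r^2).

Definition G1_density (w : R) : R := G0 r w * G2_density w.

Lemma G0_RInt (w : R) : G0 r w = RInt G0_density 0 w.
Proof. reflexivity. Qed.

Lemma G2_RInt (w : R) : G2 r w = RInt G2_density 0 w.
Proof. reflexivity. Qed.

Lemma G1_RInt (z : R) : G1 r z = 3/2 * RInt G1_density 0 z.
Proof. reflexivity. Qed.

(* Also true for r = 0, where [/ 0 = 0]. *)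
Lemma sin_sq_ratio_ge0 (y : R) : 0 <= 2 * (sin (r * y))^2 / r^2.
Proof.
  unfold Rdiv. apply Rmult_le_pos; [apply Rmult_le_pos; [lra | apply pow2_ge_0]|].
  destruct (Req_dec (r^2) 0) as [E|E].
  - rewrite E, Rinv_0. lra.
  - left. apply Rinv_0_lt_compat. pose proof (pow2_ge_0 r). lra.
Qed.

Lemma G2_density_ge0 (y : R) : 0 <= G2_density y.
Proof. apply sqrt_pos. Qed.

Lemma G0_density_ge0 (y : R) : 0 <= G0_density y.
Proof. apply Rmult_le_pos; [apply G2_density_ge0 | apply sin_sq_ratio_ge0]. Qed.

Lemma G2_density_continuous (y : R) : continuous G2_density y.
Proof.
  apply (@ex_derive_continuous R_AbsRing R_NormedModule). unfold G2_density. auto_derive.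
  pose proof (sin_sq_ratio_ge0 y). simpl in *. lra.
Qed.

Lemma G0_density_continuous (y : R) : continuous G0_density y.
Proof.
  apply (@ex_derive_continuous R_AbsRing R_NormedModule).
  unfold G0_density, G2_density. auto_derive.
  pose proof (sin_sq_ratio_ge0 y). simpl in *. lra.
Qed.

Lemma G0_derive (w : R) : is_derive (G0 r) w (G0_density w).
Proof. exact (is_derive_RInt_0 G0_density w G0_density_continuous). Qed.

Lemma G2_derive (w : R) : is_derive (G2 r) w (G2_density w).
Proof. exact (is_derive_RInt_0 G2_density w G2_density_continuous). Qed.

Lemma G1_density_continuous (w : R) : continuous G1_density w.
Proof.
  apply (@continuous_mult R_UniformSpace R_AbsRing (G0 r) G2_density).
  - exact (is_derive_continuous _ _ w (G0_derive w)).
  - apply G2_density_continuous.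
Qed.

Lemma sin_sq_even (y : R) : (sin (r * - y))^2 = (sin (r * y))^2.
Proof. replace (r * - y) with (- (r * y)) by ring. rewrite sin_neg. ring. Qed.

Lemma G2_density_even (y : R) : G2_density (- y) = G2_density y.
Proof. unfold G2_density. now rewrite sin_sq_even. Qed.

Lemma G0_density_even (y : R) : G0_density (- y) = G0_density y.
Proof. unfold G0_density. now rewrite G2_density_even, sin_sq_even. Qed.

Lemma G0_odd (w : R) : G0 r (- w) = - G0 r w.
Proof.
  rewrite !G0_RInt.
  rewrite (RInt_0_opp G0_density 1 w); [ring| |intros y; rewrite G0_density_even; ring].
  intros; apply ex_RInt_continuous_everywhere, G0_density_continuous.
Qed.

Lemma G2_odd (w : R) : G2 r (- w) = - G2 r w.
Proof.
  rewrite !G2_RInt.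
  rewrite (RInt_0_opp G2_density 1 w); [ring| |intros y; rewrite G2_density_even; ring].
  intros; apply ex_RInt_continuous_everywhere, G2_density_continuous.
Qed.

Lemma G1_even (z : R) : G1 r (- z) = G1 r z.
Proof.
  rewrite !G1_RInt.
  rewrite (RInt_0_opp G1_density (-1) z); [ring| |].
  - intros; apply ex_RInt_continuous_everywhere, G1_density_continuous.
  - intros y. unfold G1_density. rewrite G0_odd, G2_density_even. ring.
Qed.

Lemma G0_ge0 (w : R) : 0 <= w -> 0 <= G0 r w.
Proof.
  intros Hw. apply RInt_ge_0; [exact Hw| |intros; apply G0_density_ge0].
  apply ex_RInt_continuous_everywhere, G0_density_continuous.
Qed.

Hypothesis r_pos : 0 < r.

Lemma sqrt_r_sq_add_sin_sq (y : R) :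
  sqrt (r^2 + 2 * (sin (r * y))^2) = r * G2_density y.
Proof.
  unfold G2_density.
  replace (r^2 + 2 * (sin (r * y))^2) with (r^2 * (1 + 2 * (sin (r * y))^2 / r^2))
    by (field; lra).
  rewrite sqrt_mult, sqrt_pow2; [reflexivity|lra|apply pow2_ge_0|].
  pose proof (sin_sq_ratio_ge0 y). lra.
Qed.

(* Pointwise 3/(2r^2) F - F 2 sin^2(ry)/r^2 = (2/r^4) r (r F) (3/4 - sin^2(ry)), and r F(y) is
   the integrand of the hypothesis at u = r y. *)
Lemma G2_G0_defect (w : R) :
  3 / (2 * r^2) * G2 r w - G0 r w =
  2 / r^4 * RInt (fun u => sqrt (r^2 + 2 * (sin u)^2) * (3/4 - (sin u)^2)) 0 (r * w).
Proof.
  set (h := fun u => sqrt (r^2 + 2 * (sin u)^2) * (3/4 - (sin u)^2)).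
  assert (h_int : ex_RInt h (r * 0 + 0) (r * w + 0)).
  { apply ex_RInt_continuous_everywhere; intros u.
    apply (@ex_derive_continuous R_AbsRing R_NormedModule). unfold h. auto_derive.
    pose proof (pow2_gt_0 r (Rgt_not_eq _ _ r_pos)). pose proof (pow2_ge_0 (sin u)).
    simpl in *. lra. }
  assert (F_int : forall a b, ex_RInt G2_density a b)
    by (intros; apply ex_RInt_continuous_everywhere, G2_density_continuous).
  assert (K_int : forall a b, ex_RInt G0_density a b)
    by (intros; apply ex_RInt_continuous_everywhere, G0_density_continuous).
  replace (RInt h 0 (r * w)) with (RInt (fun y => r * h (r * y + 0)) 0 w)
    by (etransitivity; [apply (RInt_comp_lin h r 0 0 w h_int) | f_equal; ring]).
  rewrite G0_RInt, G2_RInt.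
  transitivity (RInt (fun y => 3 / (2 * r^2) * G2_density y - G0_density y) 0 w).
  { symmetry. apply is_RInt_unique, (@is_RInt_minus R_NormedModule).
    - apply (@is_RInt_scal R_NormedModule), (@RInt_correct R_CompleteNormedModule), F_int.
    - apply (@RInt_correct R_CompleteNormedModule), K_int. }
  transitivity (RInt (fun y => 2 / r^4 * (r * h (r * y + 0))) 0 w).
  2:{ apply is_RInt_unique, (@is_RInt_scal R_NormedModule), (@RInt_correct R_CompleteNormedModule).
      exact (@ex_RInt_comp_lin R_NormedModule h r 0 0 w h_int). }
  apply RInt_ext; intros y _. unfold h.
  replace (r * y + 0) with (r * y) by ring.
  rewrite sqrt_r_sq_add_sin_sq. unfold G0_density.
  match goal with |- @eq _ ?a ?b => change (@eq R a b) end.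
  field. lra.
Qed.

Section UnderIntegralHypothesis.

Variable r0 : R.

Hypothesis integral_nonneg : forall s beta, 0 <= s <= r0 -> 0 <= beta ->
  0 <= RInt (fun y => sqrt (s^2 + 2 * (sin y)^2) * (3/4 - (sin y)^2)) 0 beta.

Hypothesis r_le_r0 : r <= r0.

Lemma G0_le_G2 (w : R) : 0 <= w -> G0 r w <= 3 / (2 * r^2) * G2 r w.
Proof.
  intros Hw.
  assert (0 <= 2 / r^4 *
    RInt (fun u => sqrt (r^2 + 2 * (sin u)^2) * (3/4 - (sin u)^2)) 0 (r * w)).
  { apply Rmult_le_pos; [apply Rle_mult_inv_pos; [lra | apply pow_lt; lra]|].
    apply integral_nonneg; [lra|]. apply Rmult_le_pos; lra. }
  pose proof (G2_G0_defect w). lra.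
Qed.

Lemma G1_bound_nonneg (z : R) : 0 <= z -> 0 <= G1 r z <= 9/8 * (G2 r z ^ 2 / r^2).
Proof.
  intros Hz.
  assert (G1_int : ex_RInt G1_density 0 z)
    by apply ex_RInt_continuous_everywhere, G1_density_continuous.
  assert (G2_sq : is_RInt (fun w => G2 r w * G2_density w) 0 z (G2 r z ^ 2 / 2)).
  { replace (G2 r z ^ 2 / 2) with ((G2 r z ^ 2 - G2 r 0 ^ 2) / 2)
      by (rewrite (G2_RInt 0), RInt_point; unfold zero; simpl; field).
    exact (is_RInt_mul_derive _ _ 0 z G2_derive G2_density_continuous). }
  assert (lower : 0 <= RInt G1_density 0 z).
  { apply RInt_ge_0; [exact Hz|exact G1_int|intros w Hw].
    apply Rmult_le_pos; [apply G0_ge0; lra | apply G2_density_ge0]. }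
  assert (upper : RInt G1_density 0 z <= 3 / (2 * r^2) * (G2 r z ^ 2 / 2)).
  { assert (bound_int : is_RInt (fun w => 3 / (2 * r^2) * (G2 r w * G2_density w)) 0 z
                          (3 / (2 * r^2) * (G2 r z ^ 2 / 2)))
      by exact (@is_RInt_scal R_NormedModule _ 0 z _ _ G2_sq).
    rewrite <- (is_RInt_unique _ _ _ _ bound_int).
    apply RInt_le; [exact Hz|exact G1_int|eexists; exact bound_int|intros w Hw].
    unfold G1_density. rewrite <- Rmult_assoc.
    apply Rmult_le_compat_r; [apply G2_density_ge0 | apply G0_le_G2; lra]. }
  rewrite !G1_RInt.
  assert (3 / 2 * (3 / (2 * r^2) * (G2 r z ^ 2 / 2)) = 9/8 * (G2 r z ^ 2 / r^2))
    by (field; lra).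
  split; nra.
Qed.

End UnderIntegralHypothesis.

End Profiles.

Theorem corollary1 (r0 : R) (Hr0 : 0 < r0)
  (Hint : forall r beta, 0 <= r <= r0 -> 0 <= beta ->
     0 <= RInt (fun y => sqrt (r^2 + 2 * (sin y)^2) * (3/4 - (sin y)^2)) 0 beta) :
  forall r z, 0 < r <= r0 ->
    Rabs (G1 r z) <= 9/4 * (1/2) * ((G2 r z)^2 / r^2).
Proof.
  intros r z [r_pos r_le].
  assert (reduce : G1 r z = G1 r (Rabs z) /\ G2 r z ^ 2 = G2 r (Rabs z) ^ 2).
  { unfold Rabs. destruct (Rcase_abs z); [|auto].
    rewrite G1_even, G2_odd. split; [reflexivity|ring]. }
  destruct reduce as [-> ->].
  pose proof (G1_bound_nonneg r r_pos r0 Hint r_le (Rabs z) (Rabs_pos z)) as [lo hi].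
  rewrite Rabs_pos_eq by exact lo. lra.
Qed.
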